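(* Let $\mathbf{T}=(T_1,\dots,T_m)$ and $\mathbf{T}^0=(T^0_1,\dots,T^0_m)$ be real random vectors and $\mathcal{H}_0\subset[m]$ such that for every $i\in\mathcal{H}_0$, $(T_i,T_i^0\mid\mathbf{T}_{-i},\mathbf{T}^0_{-i})\stackrel{d}{=}(T_i^0,T_i\mid\mathbf{T}_{-i},\mathbf{T}^0_{-i})$. Define $g(t)=\hat f_0(t)/\hat f_{mix}(t)$, where $$\hat f_{mix}(t)=\frac{1}{2m}\sum_{i=1}^m\big[K_{h_{mix}}(t-T_i)+K_{h_{mix}}(t-T_i^0)\big],$$ $K_h(t)=h^{-1}K(t/h)$ for a symmetric kernel $K$ with $\int K=1$, $\int tK(t)dt=0$, $\int t^2K(t)dt<\infty$, and the bandwidth $h_{mix}=h_{mix}(\mathbf{T},\mathbf{T}^0)$ is invariant under every permutation of the $2m$ entries of $(T_1,\dots,T_m,T^0_1,\dots,T^0_m)$; and $\hat f_0$ is one of the following two estimators: (KN) with $\tilde T_i^0=T_i$ if $|T_i|\le|T_i^0|$ and $\tilde T_i^0=T_i^0$ otherwise, $\hat f_0(t)=\frac{1}{2m}\big[\sum_{i=1}^mK_{h_0}(t-\tilde T^0_i)+\sum_{i=1}^mK_{h_0}(t+\tilde T^0_i)\big]$, where $h_0$ is a function of $(\tilde{\mathbf{T}}^0,-\tilde{\mathbf{T}}^0)$ invariant under permutations of its $2m$ entries; (JC) with $(X_1,\dots,X_{2m})=(T_1,\dots,T_m,T^0_1,\dots,T^0_m)$, $\varphi_{2m}(s)=\frac1{2m}\sum_{j=1}^{2m}e^{\mathrm{i}sX_j}$,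 a fixed $\gamma\in(0,1/2)$, $\hat s=\inf\{s\in[0,\log(2m)]:|\varphi_{2m}(s)|=(2m)^{-\gamma}\}$, $\hat\sigma_0^2=-\frac{\frac{d}{ds}|\varphi_{2m}(s)|}{s|\varphi_{2m}(s)|}\big|_{s=\hat s}$, $\hat\mu_0=\frac{\mathrm{Re}(\varphi_{2m}(s))\mathrm{Im}(\varphi_{2m}'(s))-\mathrm{Re}(\varphi_{2m}'(s))\mathrm{Im}(\varphi_{2m}(s))}{|\varphi_{2m}(s)|^2}\big|_{s=\hat s}$, and $\hat f_0(t)=\phi_{\hat\sigma_0}(t-\hat\mu_0)$, the $\mathcal N(\hat\mu_0,\hat\sigma_0^2)$ density. Then $U_i=g(T_i)$ and $U_i^0=g(T_i^0)$ satisfy, for every $i\in\mathcal{H}_0$, $$(U_i,U_i^0\mid\mathbf{U}_{-i},\mathbf{U}^0_{-i})\stackrel{d}{=}(U_i^0,U_i\mid\mathbf{U}_{-i},\mathbf{U}^0_{-i}).$$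
   Context: $\mathbf{a}_{-i}$ denotes a vector with its $i$-th entry removed. In the paper $(\mathbf{T},\mathbf{T}^0)$ are the test and calibration samples produced by its one- or two-sample construction, which satisfy the stated null pairwise exchangeability. *)

From HB Require Import structures.
From mathcomp Require Import all_boot all_order all_algebra all_fingroup.
From mathcomp Require Import all_classical all_reals all_analysis.
Set Implicit Arguments. Unset Strict Implicit. Unset Printing Implicit Defensive.
Import Order.TTheory GRing.Theory Num.Def Num.Theory.
Local Open Scope classical_set_scope.
Local Open Scope ring_scope.

Section Defs.
Context {R : realType}.

Definition data2 (m : nat) := (('I_m -> R) * ('I_m -> R))%type.

(** Borel sigma-algebra on R^m x R^m: generated by the coordinate maps. *)
Definition coord_sets (m : nat) : set (set (data2 m)) :=
  [set A | exists (i : 'I_m) (B : set R), measurable B /\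
     (A = (fun p : data2 m => p.1 i) @^-1` B \/ A = (fun p : data2 m => p.2 i) @^-1` B)].
Definition borel2m (m : nat) : set (set (data2 m)) := <<s coord_sets (m:=m) >>.

Definition swap_at (m : nat) (i : 'I_m) (p : data2 m) : data2 m :=
  (fun j => if j == i then p.2 i else p.1 j,
   fun j => if j == i then p.1 i else p.2 j).

(** (V_i, V0_i | V_{-i}, V0_{-i}) =d (V0_i, V_i | V_{-i}, V0_{-i}),
    stated as invariance of the joint law of (V, V0) under swapping the
    i-th entries (equivalent to equality of the conditional laws). *)
Definition pair_exch {d} {Omega : measurableType d} (P : probability Omega R)
  (m : nat) (V : Omega -> data2 m) (i : 'I_m) : Prop :=
  forall A, borel2m A -> P (V @^-1` A) = P ((swap_at i \o V) @^-1` A).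

Definition cat2 (m : nat) (x y : 'I_m -> R) : 'I_(m + m) -> R :=
  fun k => match fintype.split k with inl i => x i | inr i => y i end.

Definition perm_invariant (n : nat) (h : ('I_n -> R) -> R) : Prop :=
  forall (s : {perm 'I_n}) (x : 'I_n -> R), h (x \o s) = h x.

Definition Kh (K : R -> R) (h t : R) : R := h^-1 * K (t / h).

Definition kernel_ok (K : R -> R) : Prop :=
  [/\ (forall t, K (- t) = K t),
      (lebesgue_measure : measure _ R).-integrable setT (EFin \o K),
      (\int[lebesgue_measure]_t (K t)%:E = 1)%E,
      (lebesgue_measure : measure _ R).-integrable setT (EFin \o (fun t => t * K t)) /\
        (\int[lebesgue_measure]_t (t * K t)%:E = 0)%E &
      (lebesgue_measure : measure _ R).-integrable setT (EFin \o (fun t => t ^+ 2 * K t))].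

Definition fmix (K : R -> R) (m : nat) (hmix : ('I_(m + m) -> R) -> R)
  (x y : 'I_m -> R) (t : R) : R :=
  let h := hmix (cat2 x y) in
  ((2 * m)%:R)^-1 * \sum_(i < m) (Kh K h (t - x i) + Kh K h (t - y i)).

Definition tildeT0 (m : nat) (x y : 'I_m -> R) (i : 'I_m) : R :=
  if `|x i| <= `|y i| then x i else y i.

Definition f0KN (K : R -> R) (m : nat) (h0 : ('I_(m + m) -> R) -> R)
  (x y : 'I_m -> R) (t : R) : R :=
  let tl := tildeT0 x y in
  let h := h0 (cat2 tl (fun i => - tl i)) in
  ((2 * m)%:R)^-1 * (\sum_(i < m) Kh K h (t - tl i) + \sum_(i < m) Kh K h (t + tl i)).

(** (JC) estimator. phi_{2m}(s) = Rephi s + i Imphi s. *)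
Definition Rephi (m : nat) (x y : 'I_m -> R) (s : R) : R :=
  ((2 * m)%:R)^-1 * \sum_(j < m + m) cos (s * cat2 x y j).
Definition Imphi (m : nat) (x y : 'I_m -> R) (s : R) : R :=
  ((2 * m)%:R)^-1 * \sum_(j < m + m) sin (s * cat2 x y j).
Definition absphi (m : nat) (x y : 'I_m -> R) (s : R) : R :=
  Num.sqrt (Rephi x y s ^+ 2 + Imphi x y s ^+ 2).

Definition shat (gamma : R) (m : nat) (x y : 'I_m -> R) : R :=
  inf [set s | 0 <= s <= ln (2 * m)%:R /\
               absphi x y s = ((2 * m)%:R) `^ (- gamma)].

Definition sigma2hat (gamma : R) (m : nat) (x y : 'I_m -> R) : R :=
  let s := shat gamma x y in
  - (derive1 (absphi x y) s) / (s * absphi x y s).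

Definition muhat (gamma : R) (m : nat) (x y : 'I_m -> R) : R :=
  let s := shat gamma x y in
  (Rephi x y s * derive1 (Imphi x y) s - derive1 (Rephi x y) s * Imphi x y s)
    / (absphi x y s ^+ 2).

Definition f0JC (gamma : R) (m : nat) (x y : 'I_m -> R) (t : R) : R :=
  normal_pdf (muhat gamma x y) (Num.sqrt (sigma2hat gamma x y)) t.

Definition gfun (K : R -> R) (m : nat) (hmix : ('I_(m + m) -> R) -> R)
  (f0 : ('I_m -> R) -> ('I_m -> R) -> R -> R) (x y : 'I_m -> R) (t : R) : R :=
  f0 x y t / fmix K hmix x y t.

Definition Umap (K : R -> R) (m : nat) (hmix : ('I_(m + m) -> R) -> R)
  (f0 : ('I_m -> R) -> ('I_m -> R) -> R -> R) (p : data2 m) : data2 m :=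
  (fun i => gfun K hmix f0 p.1 p.2 (p.1 i),
   fun i => gfun K hmix f0 p.1 p.2 (p.2 i)).

End Defs.

From HB Require Import structures.
From mathcomp Require Import all_boot all_order all_algebra all_fingroup.
From mathcomp Require Import all_classical all_reals all_analysis.
Import Order.TTheory GRing.Theory Num.Def Num.Theory.
Local Open Scope classical_set_scope.
Local Open Scope ring_scope.

(* Swapping the i-th entries of T and T0 only permutes the pooled sample of
   2m points, so every symmetric statistic of that sample (the bandwidth
   h_mix, the mixture estimate, the empirical characteristic function and
   hence the JC estimate) is unchanged.  In the KN case the swap changes
   tildeT0_i at most by a sign, which again only permutes the symmetrised
   sample (tildeT0, -tildeT0).  Hence g is swap invariant, the map
   (T, T0) |-> (U, U0) commutes with the swap, and the exchangeability of
   (T, T0) is transported to (U, U0) through this measurable map. *)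

Section KernelDensity.
Context {R : realType}.

Definition kde {n : nat} (K : R -> R) (h : ('I_n -> R) -> R) (z : 'I_n -> R)
  (t : R) : R :=
  n%:R^-1 * \sum_(k < n) Kh K (h z) (t - z k).

Lemma kde_perm n (K : R -> R) (h : ('I_n -> R) -> R) (s : {perm 'I_n}) z :
  perm_invariant h -> kde K h (z \o s) = kde K h z.
Proof.
move=> h_inv; apply: funext => t; rewrite /kde h_inv; congr (_ * _).
by rewrite [RHS](reindex_inj (@perm_inj _ s)).
Qed.

End KernelDensity.

Section SwapAt.
Context {R : realType} {m : nat}.
Variable i : 'I_m.

Lemma cat2_lshift (x y : 'I_m -> R) j : cat2 x y (lshift m j) = x j.
Proof. by rewrite /cat2 (@unsplitK m m (inl j)). Qed.

Lemma cat2_rshift (x y : 'I_m -> R) j : cat2 x y (rshift m j) = y j.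
Proof. by rewrite /cat2 (@unsplitK m m (inr j)). Qed.

Lemma sum_cat2 (F : R -> R) (x y : 'I_m -> R) :
  \sum_(k < m + m) F (cat2 x y k) = \sum_(j < m) (F (x j) + F (y j)).
Proof.
rewrite big_split_ord big_split /=.
by congr (_ + _); apply: eq_bigr => j _; rewrite ?cat2_lshift ?cat2_rshift.
Qed.

Definition pooled (p : @data2 R m) : 'I_(m + m) -> R := cat2 p.1 p.2.

Lemma pooled_swap_at (p : @data2 R m) :
  pooled (swap_at i p) = pooled p \o tperm (lshift m i) (rshift m i).
Proof.
apply: funext => k; rewrite /pooled /= -(fintype.splitK k).
case: (fintype.split k) => j /=; have [->|/negbTE ji] := eqVneq j i.
- by rewrite tpermL cat2_lshift cat2_rshift eqxx.
- by rewrite tpermD ?eq_rlshift 1?eq_sym ?eq_lshift ?ji // !cat2_lshift ji.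
- by rewrite tpermR cat2_lshift cat2_rshift eqxx.
- by rewrite tpermD ?eq_lrshift 1?eq_sym ?eq_rshift ?ji // !cat2_rshift ji.
Qed.

Lemma sum_pooled_swap_at (F : R -> R) (p : @data2 R m) :
  \sum_(k < m + m) F (pooled (swap_at i p) k) = \sum_(k < m + m) F (pooled p k).
Proof.
rewrite pooled_swap_at /=.
by rewrite [RHS](reindex_inj (@perm_inj _ (tperm (lshift m i) (rshift m i)))).
Qed.

Definition sym_sample (v : 'I_m -> R) : @data2 R m := (v, fun j => - v j).

(* Ties |x_i| = |y_i| are where tildeT0_i may flip sign under the swap. *)
Lemma tildeT0_swap_at (p : @data2 R m) :
  let tl := tildeT0 p.1 p.2 in
  let tl' := tildeT0 (swap_at i p).1 (swap_at i p).2 in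
  sym_sample tl' = sym_sample tl \/ sym_sample tl' = swap_at i (sym_sample tl).
Proof.
move=> tl tl'.
have tl'_neq j : j != i -> tl' j = tl j.
  by move=> /negbTE ji; rewrite /tl' /tl /tildeT0 /= ji.
have [tl'_i|tl'_i] : tl' i = tl i \/ tl' i = - tl i.
  rewrite /tl' /tl /tildeT0 /= eqxx.
  have [yx|/ltW ->] := leP `|p.2 i| `|p.1 i|; last by left.
  have [xy|_] := leP `|p.1 i| `|p.2 i|; last by left.
  have /eqP := le_anti (andb_true_intro (conj xy yx)).
  by rewrite eqr_norm2 => /orP[] /eqP ->; [left | right; rewrite opprK].
- left; congr sym_sample; apply: funext => j.
  by have [->|/tl'_neq] := eqVneq j i.
- right; rewrite /sym_sample /swap_at /=; congr pair; apply: funext => j.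
  + by case: eqVneq => [->|/tl'_neq //]; rewrite tl'_i.
  + by case: eqVneq => [->|/tl'_neq -> //]; rewrite tl'_i opprK.
Qed.

Lemma kde_pooled_swap_at K (h : ('I_(m + m) -> R) -> R) (p : @data2 R m) :
  perm_invariant h -> kde K h (pooled (swap_at i p)) = kde K h (pooled p).
Proof. by move=> h_inv; rewrite pooled_swap_at kde_perm. Qed.

End SwapAt.

Section Estimators.
Context {R : realType} {m : nat}.

Lemma natr_double : ((2 * m)%:R : R) = (m + m)%:R.
Proof. by rewrite mul2n -addnn. Qed.

Lemma fmixE K hmix (x y : 'I_m -> R) : fmix K hmix x y = kde K hmix (pooled (x, y)).
Proof.
apply: funext => t; rewrite /fmix /kde natr_double.
by rewrite (sum_cat2 (fun u => Kh K _ (t - u))).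
Qed.

Lemma f0KNE K h0 (x y : 'I_m -> R) :
  f0KN K h0 x y = kde K h0 (pooled (sym_sample (tildeT0 x y))).
Proof.
apply: funext => t; rewrite /f0KN /kde natr_double -big_split /=.
rewrite (sum_cat2 (fun u => Kh K _ (t - u))) /=.
by congr (_ * _); apply: eq_bigr => j _; rewrite opprK.
Qed.

Variable i : 'I_m.

Lemma fmix_swap_at K hmix (p : @data2 R m) : perm_invariant hmix ->
  fmix K hmix (swap_at i p).1 (swap_at i p).2 = fmix K hmix p.1 p.2.
Proof. by move=> hmix_inv; rewrite !fmixE kde_pooled_swap_at. Qed.

Lemma f0KN_swap_at K h0 (p : @data2 R m) : perm_invariant h0 ->
  f0KN K h0 (swap_at i p).1 (swap_at i p).2 = f0KN K h0 p.1 p.2.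
Proof.
move=> h0_inv; rewrite !f0KNE.
by case: (tildeT0_swap_at i p) => ->; rewrite ?kde_pooled_swap_at.
Qed.

Lemma Rephi_swap_at (p : @data2 R m) :
  Rephi (swap_at i p).1 (swap_at i p).2 = Rephi p.1 p.2.
Proof.
by apply: funext => s; rewrite /Rephi (sum_pooled_swap_at i (fun u => cos (s * u))).
Qed.

Lemma Imphi_swap_at (p : @data2 R m) :
  Imphi (swap_at i p).1 (swap_at i p).2 = Imphi p.1 p.2.
Proof.
by apply: funext => s; rewrite /Imphi (sum_pooled_swap_at i (fun u => sin (s * u))).
Qed.

Lemma f0JC_swap_at gamma (p : @data2 R m) :
  f0JC gamma (swap_at i p).1 (swap_at i p).2 = f0JC gamma p.1 p.2.
Proof.
by rewrite /f0JC /muhat /sigma2hat /shat /absphi Rephi_swap_at Imphi_swap_at.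
Qed.

Lemma Umap_swap_at K hmix (f0 : ('I_m -> R) -> ('I_m -> R) -> R -> R) :
  perm_invariant hmix ->
  (forall p, f0 (swap_at i p).1 (swap_at i p).2 = f0 p.1 p.2) ->
  forall p, Umap K hmix f0 (swap_at i p) = swap_at i (Umap K hmix f0 p).
Proof.
move=> hmix_inv f0_inv p.
have g_inv : gfun K hmix f0 (swap_at i p).1 (swap_at i p).2 = gfun K hmix f0 p.1 p.2.
  by rewrite /gfun fmix_swap_at // f0_inv.
rewrite /Umap g_inv /swap_at /=; congr pair; apply: funext => j; by case: ifP.
Qed.

End Estimators.

Lemma pair_exch_comp {R : realType} {d} {Omega : measurableType d}
  {P : probability Omega R} {m} {V : Omega -> @data2 R m} {i : 'I_m}
  {f : @data2 R m -> @data2 R m} :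
  (forall A, borel2m A -> borel2m (f @^-1` A)) ->
  (forall p, f (swap_at i p) = swap_at i (f p)) ->
  pair_exch P V i -> pair_exch P (f \o V) i.
Proof.
move=> f_meas f_swap V_exch A A_borel.
have := V_exch _ (f_meas A A_borel); rewrite /preimage /= => ->.
by congr (P _); apply: funext => w; rewrite /= f_swap.
Qed.

Theorem proposition2 (R : realType) (d : measure_display) (Omega : measurableType d)
  (P : probability Omega R) (m : nat) (T T0 : Omega -> 'I_m -> R) (H0 : {set 'I_m})
  (K : R -> R) (hmix : ('I_(m + m) -> R) -> R)
  (f0 : ('I_m -> R) -> ('I_m -> R) -> R -> R) :
  (forall i, measurable_fun setT (fun w => T w i)) ->
  (forall i, measurable_fun setT (fun w => T0 w i)) ->
  (forall i, i \in H0 -> pair_exch P (fun w => (T w, T0 w)) i) ->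
  kernel_ok K ->
  perm_invariant hmix ->
  ((exists h0 : ('I_(m + m) -> R) -> R, perm_invariant h0 /\ f0 = f0KN K h0) \/
   (exists gamma : R, 0 < gamma < 2^-1 /\ f0 = @f0JC R gamma m)) ->
  (forall A, borel2m A -> borel2m (Umap K hmix f0 @^-1` A)) ->
  forall i, i \in H0 -> pair_exch P (fun w => Umap K hmix f0 (T w, T0 w)) i.
Proof.
move=> _ _ T_exch _ hmix_inv f0_def U_meas i iH0.
have f0_inv p : f0 (swap_at i p).1 (swap_at i p).2 = f0 p.1 p.2.
  case: f0_def => [[h0 [h0_inv ->]] | [gamma [_ ->]]].
  - exact: f0KN_swap_at.
  - exact: f0JC_swap_at.
exact: pair_exch_comp U_meas (Umap_swap_at i K hmix f0 hmix_inv f0_inv) (T_exch i iH0).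
Qed.
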